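(* Let $t\ge 2$, $k\ge 1$, and let $a_1,\dots,a_t\in\mathbb{F}_2[x]$ be polynomials each coprime with $x^k-1$. Let $C$ be the binary linear $[tk,k]$ code (a $1$-generator quasi-cyclic code of co-index $k$ with generating row $(a_1,\dots,a_t)$) generated by the rows of the $k\times tk$ matrix $(\mathrm{Circ}(a_1)\mid\mathrm{Circ}(a_2)\mid\cdots\mid\mathrm{Circ}(a_t))$. Then $C$ is a $t$-CIS code.
   Context: For $a\in\mathbb{F}_2[x]$, write $a\bmod (x^k-1)=\sum_{i=0}^{k-1}\alpha_ix^i$; $\mathrm{Circ}(a)$ is the $k\times k$ circulant matrix over $\mathbb{F}_2$ whose first row is $(\alpha_0,\dots,\alpha_{k-1})$ and each subsequent row is the cyclic right shift of the previous one. A binary linear $[tk,k]$ code is $t$-CIS if its coordinate set can be partitioned into $t$ pairwise disjoint information sets, an information set being a set of $k$ coordinates whose columns in a generator matrix are linearly independent. *)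

From mathcomp Require Import all_boot all_order all_algebra.
Set Implicit Arguments. Unset Strict Implicit. Unset Printing Implicit Defensive.
Import GRing.Theory.
Local Open Scope ring_scope.

Definition Circ (k : nat) (a : {poly 'F_2}) : 'M['F_2]_k :=
  \matrix_(i < k, j < k) (a %% ('X^k - 1))`_((j + k - i) %% k)%N.

Definition qc_genmx (k t : nat) (a : 'I_t -> {poly 'F_2}) :=
  \mxrow_(b < t) Circ k (a b).

Definition info_set (k n : nat) (G : 'M['F_2]_(k, n)) (S : {set 'I_n}) : bool :=
  (#|S| == k) && (\rank (colsub (fun j : 'I_#|S| => enum_val j) G) == #|S|).

Definition is_CIS (t k n : nat) (G : 'M['F_2]_(k, n)) : Prop :=
  exists P : 'I_t -> {set 'I_n},
    [/\ forall i j : 'I_t, i != j -> [disjoint P i & P j],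
        \bigcup_(i < t) P i = [set: 'I_n] &
        forall i : 'I_t, info_set G (P i)].

From mathcomp Require Import all_boot all_order all_algebra.
Set Implicit Arguments. Unset Strict Implicit. Unset Printing Implicit Defensive.
Import GRing.Theory.
Local Open Scope ring_scope.

(* Circ(a) is the polynomial a evaluated at the cyclic shift matrix S, and
   S^k = 1, so Bezout's identity u a + v (x^k - 1) = 1 makes Circ(a) invertible
   when a is coprime with x^k - 1.  The t column blocks of
   (Circ(a_1) | ... | Circ(a_t)) therefore partition the coordinates into t
   information sets. *)

Section ShiftMatrix.
Variables (R : comNzRingType) (n : nat).
Local Notation N := n.+1.

Definition shift_mx : 'M[R]_N := \matrix_(i, j) (j == ((i + 1) %% N)%N :> nat)%:R.

Lemma shift_mxX m : shift_mx ^+ m = \matrix_(i, j) (j == ((i + m) %% N)%N :> nat)%:R.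
Proof.
elim: m => [|m IHm]; apply/matrixP => i j.
  by rewrite expr0 !mxE addn0 modn_small // eq_sym.
rewrite exprSr IHm -mulmxE !mxE.
have lt_im : ((i + m) %% N < N)%N by rewrite ltn_pmod.
rewrite (bigD1 (Ordinal lt_im)) //= big1 ?addr0.
  by rewrite !mxE eqxx mul1r modnDml addn1 addnS.
move=> l ne_l; rewrite !mxE.
suff /negbTE -> : l != ((i + m) %% N)%N :> nat by rewrite mul0r.
by apply: contra_neq ne_l => l_eq; apply: val_inj.
Qed.

Lemma shift_mx_root : horner_mx shift_mx ('X^N - 1) = 0.
Proof.
rewrite rmorphB rmorphXn /= horner_mx_X rmorph1 shift_mxX.
apply/eqP; rewrite subr_eq0; apply/eqP/matrixP => i j.
by rewrite !mxE modnDr modn_small // eq_sym.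
Qed.

Lemma horner_shift_mx (p : {poly R}) : (size p <= N)%N ->
  horner_mx shift_mx p = \matrix_(i, j) p`_((j + N - i) %% N)%N.
Proof.
move=> le_pN.
have {1}-> : p = \poly_(m < N) p`_m.
  apply/polyP => m; rewrite coef_poly; case: ltnP => // le_Nm.
  by rewrite nth_default // (leq_trans le_pN).
rewrite poly_def rmorph_sum /=; apply/matrixP => i j; rewrite !mxE summxE.
have lt_ji : ((j + N - i) %% N < N)%N by rewrite ltn_pmod.
rewrite (bigD1 (Ordinal lt_ji)) //= big1 ?addr0.
  rewrite linearZ /= rmorphXn /= horner_mx_X shift_mxX !mxE.
  rewrite modnDmr addnBA ?(leq_trans (ltnW (ltn_ord i))) ?leq_addl //.
  by rewrite addKn modnDr (modn_small (ltn_ord j)) eqxx mulr1.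
move=> m ne_m; rewrite linearZ /= rmorphXn /= horner_mx_X shift_mxX !mxE.
suff /negbTE -> : j != ((i + m) %% N)%N :> nat by rewrite mulr0.
apply: contra_neq ne_m => j_eq; apply: val_inj => /=.
rewrite j_eq -(modn_small (ltn_ord m)); apply/eqP.
rewrite -(eqn_modDr i) subnK; last by rewrite ltnW // ltn_addl.
by rewrite modnDr modn_mod modnDmr addnC.
Qed.
End ShiftMatrix.

Lemma horner_mx_modp (F : fieldType) n (A : 'M[F]_n.+1) (p q : {poly F}) :
  horner_mx A q = 0 -> horner_mx A (p %% q) = horner_mx A p.
Proof.
by move=> qA0; rewrite [in RHS](divp_eq p q) rmorphD rmorphM /= qA0 mulr0 add0r.
Qed.

Lemma horner_mx_unitmx (F : fieldType) n (A : 'M[F]_n.+1) (p q : {poly F}) :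
  horner_mx A q = 0 -> coprimep p q -> horner_mx A p \in unitmx.
Proof.
move=> qA0 /Bezout_eq1_coprimepP [[u v] /= /(congr1 (horner_mx A))].
rewrite rmorphD !rmorphM /= qA0 mulr0 addr0 rmorph1 -mulmxE.
by case/mulmx1_unit.
Qed.

Lemma Circ_horner_shift_mx k (p : {poly 'F_2}) :
  Circ k.+1 p = horner_mx (shift_mx _ k) p.
Proof.
rewrite -(horner_mx_modp _ (shift_mx_root _ k)) horner_shift_mx.
  by apply/matrixP => i j; rewrite !mxE.
have size_q : size ('X^(k.+1) - 1 : {poly 'F_2}) = k.+2.
  by rewrite -polyC1 size_XnsubC.
by rewrite -ltnS -size_q ltn_modp -size_poly_eq0 size_q.
Qed.

Lemma Circ_unitmx k (p : {poly 'F_2}) :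
  (0 < k)%N -> coprimep p ('X^k - 1) -> Circ k p \in unitmx.
Proof.
case: k => // k _; rewrite Circ_horner_shift_mx.
exact/horner_mx_unitmx/shift_mx_root.
Qed.

Lemma mxrank_colsub1 (F : fieldType) n m (s : 'I_m -> 'I_n) :
  injective s -> \rank (colsub s (1%:M : 'M[F]_n)) = m.
Proof.
move=> s_inj; apply/eqP; rewrite eqn_leq rank_leq_col -{1}(mxrank1 F m).
suff <- : (colsub s 1%:M)^T *m colsub s 1%:M = 1%:M :> 'M[F]_m.
  exact: mxrankM_maxr.
apply/matrixP => i j; rewrite !mxE (bigD1 (s i)) //= big1 ?addr0.
  by rewrite !mxE eqxx mul1r (inj_eq s_inj).
by move=> l ne_l; rewrite !mxE (negbTE ne_l) mul0r.
Qed.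

Lemma mxrank_colsub_unitmx (F : fieldType) n m (C : 'M[F]_n) (s : 'I_m -> 'I_n) :
  C \in unitmx -> injective s -> \rank (colsub s C) = m.
Proof.
move=> C_unit s_inj; rewrite -[C]mulmx1 -mulmx_colsub -mxrank_tr trmx_mul.
by rewrite mxrankMfree ?row_free_unit ?unitmx_tr // mxrank_tr mxrank_colsub1.
Qed.

Lemma info_set_codom k n (G : 'M['F_2]_(k, n)) (f : 'I_k -> 'I_n) :
  injective f -> colsub f G \in unitmx -> info_set G [set x in codom f].
Proof.
set S := [set x in codom f] => f_inj fG_unit.
have S_codom (j : 'I_#|S|) : enum_val j \in codom f.
  by have := enum_valP j; rewrite inE.
pose g j := iinv (S_codom j).
have fg j : f (g j) = enum_val j by exact: f_iinv.
have card_S : #|S| = k by rewrite cardsE card_codom // card_ord.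
rewrite /info_set {1}card_S eqxx /=.
rewrite -(eq_colsub _ fg G) (colsub_comp f g) mxrank_colsub_unitmx //.
by move=> i j /(congr1 f); rewrite !fg => /enum_val_inj.
Qed.

Lemma is_CIS_mxrow t k (B : 'I_t -> 'M['F_2]_k) :
  (forall b, B b \in unitmx) -> is_CIS t (\mxrow_(b < t) B b).
Proof.
move=> B_unit; pose P b := [set x in codom (@tagnat.Rank t (fun=> k) b)].
have sig1_P b x : x \in P b -> tagnat.sig1 x = b.
  by rewrite inE => /codomP [j ->]; rewrite tagnat.Rank1K.
exists P; split.
- move=> i j ne_ij; rewrite -setI_eq0; apply/eqP/setP => x.
  rewrite in_setI in_set0; apply/negbTE; apply: contra ne_ij.
  by case/andP => /sig1_P <- /sig1_P <-.
- apply/setP => x; rewrite inE; apply/bigcupP; exists (tagnat.sig1 x) => //.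
  by rewrite inE -[x in x \in _]tagnat.sig2K codom_f.
- move=> b; apply: info_set_codom.
    by move=> i j /(congr1 val) /eqP; rewrite tagnat.eq_Rank eqxx => /eqP /val_inj.
  by have := mxrowK B b; rewrite /submxrow => ->.
Qed.

Theorem proposition4 (t k : nat) (a : 'I_t -> {poly 'F_2}) :
  (2 <= t)%N -> (1 <= k)%N ->
  (forall i : 'I_t, coprimep (a i) ('X^k - 1)) ->
  is_CIS t (qc_genmx k a).
Proof.
move=> _ k_gt0 a_coprime; apply: is_CIS_mxrow => b.
exact: Circ_unitmx.
Qed.
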